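(* Assume the setting of the context and fix $\Delta=(h,\Delta x)$. Let $(c^{(\iota)}_{i,j})$, $\iota\in\mathbb{N}$, and $\mathbf{V}^{(\iota)}=(\mathbf{V}^{(\iota)}_1,\mathbf{V}^{(\iota)}_2)\in B(\mathcal{A}^{\Delta x})^2$ be a sequence generated by the policy iteration: starting from an initial policy $c^{(0)}_{i,j}\in\mathcal{C}^\Delta_j(x_i)$, for each $\iota\ge0$, (i) (policy evaluation) $\mathbf{V}^{(\iota)}$ solves, for all $i\in\mathbb{N}$, $j=1,2$, $$V^{(\iota)}_{i,j}=hu(c^{(\iota)}_{i,j})+(1-\rho h)\Big[\lambda_jhV^{(\iota)}_{i,\bar\jmath}+(1-\lambda_jh)\sum_k\beta_k\big(x_i+hs_{i,j}(c^{(\iota)}_{i,j})\big)V^{(\iota)}_{k,j}\Big];$$ (ii) (policy update) $c^{(\iota+1)}_{i,j}\in\arg\max_{c\in\mathcal{C}^\Delta_j(x_i)}\Big\{hu(c)+(1-\rho h)(1-\lambda_jh)\sum_k\beta_k(x_i+hs_{i,j}(c))V^{(\iota)}_{k,j}\Big\}$. Then $\mathbf{V}^{(\iota)}\le\mathbf{V}^{(\iota+1)}$ componentwise for all $\iota\in\mathbb{N}$. Moreover $\lim_{\iota\to\infty}\mathbf{V}^{(\iota)}=\mathbf{V}$, where $\mathbf{V}\in B(\mathcal{A}^{\Delta x})^2$ is the unique solution of the scheme, i.e. $\mathcal{F}^\Delta_j(x_i,(V_{i,j},V_{i,\bar\jmath}),V_{\cdot,j})=0$ for all $i\in\mathbb{N}$,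 $j=1,2$.
   Context: Constants: $\rho>0$, $r<\rho$, $0<y_1<y_2$, $\gamma>1$, $\underline{x}\le0$ with $\rho\underline{x}+y_j>0$, $\lambda_1,\lambda_2\ge0$; $\bar\jmath=3-j$; $u(c)=\frac{c^{1-\gamma}}{1-\gamma}$ for $c>0$, $u(0)=-\infty$. Discretization $\Delta=(h,\Delta x)$, $h,\Delta x>0$, $\rho h<1$, $\lambda_jh<1$. Grid $x_i=\underline{x}+i\Delta x$, $i\in\mathbb{N}=\{0,1,\dots\}$, $\mathcal{A}^{\Delta x}=\{x_i\}$; $B(\mathcal{A}^{\Delta x})$ = bounded real sequences indexed by $\mathbb{N}$. $\beta_k(x)=\max\{0,1-|x-x_k|/\Delta x\}$ for $x\ge\underline{x}$. $\mathcal{C}^\Delta_j(x_i)=\{c\ge0:x_i+h(rx_i+y_j-c)\ge\underline{x}\}$, $s_{i,j}(c)=rx_i+y_j-c$. Scheme: $$\mathcal{F}^\Delta_j(x_i,(\mathsf{q}_j,\mathsf{q}_{\bar\jmath}),\mathsf{U})=\rho\mathsf{q}_j-(1-\rho h)\lambda_j(\mathsf{q}_{\bar\jmath}-\mathsf{q}_j)-\sup_{c\in\mathcal{C}^\Delta_j(x_i)}\Big\{u(c)+\frac{(1-\rho h)(1-\lambda_jh)}{h}\Big(\sum_k\beta_k(x_i+hs_{i,j}(c))\mathsf{U}_k-\mathsf{q}_j\Big)\Big\}.$$ *)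

From HB Require Import structures.
From mathcomp Require Import all_boot all_order all_algebra.
From mathcomp Require Import all_classical all_reals all_analysis.
Set Implicit Arguments. Unset Strict Implicit. Unset Printing Implicit Defensive.
Import Order.TTheory GRing.Theory Num.Theory.
Import numFieldNormedType.Exports.
Local Open Scope ring_scope.

(* Regime index j in {1,2} is encoded by a bool: false = regime 1,
   true = regime 2; the other regime \bar j is ~~ j. *)

Section Defs.
Variable R : realType.

(* CRRA utility, extended-real valued: u(c) = c^(1-gamma)/(1-gamma) for c > 0,
   u(c) = -oo for c <= 0 (only c >= 0 is ever used). *)
Definition util (gamma c : R) : \bar R :=
  if 0 < c then ((c `^ (1 - gamma)) / (1 - gamma))%:E else -oo%E.

Definition grid (xlow dx : R) (i : nat) : R := xlow + i%:R * dx.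

Definition hatb (xlow dx : R) (k : nat) (x : R) : R :=
  Num.max 0 (1 - `|x - grid xlow dx k| / dx).

(* sum_k beta_k(x) U_k  (a series with at most two nonzero terms) *)
Definition interp (xlow dx : R) (U : nat -> R) (x : R) : R :=
  limn (series (fun k => hatb xlow dx k x * U k)).

Definition drift (r xlow dx : R) (y : bool -> R) (i : nat) (j : bool) (c : R) : R :=
  r * grid xlow dx i + y j - c.

Definition adm (r xlow h dx : R) (y : bool -> R) (i : nat) (j : bool) : set R :=
  [set c | 0 <= c /\ xlow <= grid xlow dx i + h * drift r xlow dx y i j c].

Definition bnd (U : nat -> R) : Prop := exists M : R, forall i, `|U i| <= M.

Definition schemeF (rho r gamma xlow h dx : R) (y lam : bool -> R)
  (i : nat) (j : bool) (qj qjb : R) (U : nat -> R) : \bar R :=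
  ((rho * qj - (1 - rho * h) * lam j * (qjb - qj))%:E
   - ereal_sup [set (util gamma c +
        ((1 - rho * h) * (1 - lam j * h) / h *
          (interp xlow dx U (grid xlow dx i + h * drift r xlow dx y i j c) - qj))%:E)%E
       | c in adm r xlow h dx y i j])%E.

Definition polobj (rho r gamma xlow h dx : R) (y lam : bool -> R)
  (i : nat) (j : bool) (U : nat -> R) (c : R) : \bar R :=
  (h%:E * util gamma c +
   ((1 - rho * h) * (1 - lam j * h) *
     interp xlow dx U (grid xlow dx i + h * drift r xlow dx y i j c))%:E)%E.

End Defs.

(* Write T_c A for the right-hand side of the policy evaluation equation, with
   control c and continuation A.  The weights lam_j h, 1 - lam_j h and the two
   nonzero hat weights are convex weights, so A - B <= E everywhere implies
   T_c A - T_c B <= (1 - rho h) E: every T_c is a one-sided contraction, and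
   F = 0 says exactly that A_{ij} = sup_c T_c A.  Policy improvement gives
   V^k - V^{k+1} <= (1 - rho h) sup (V^k - V^{k+1}), hence monotonicity, and
   u <= 0 bounds V^k above by 0.  The pointwise limit W then satisfies
   W - V^k <= (1 - rho h)^k M, so the convergence is uniform, which lets one pass
   to the limit in T_c V^k <= V^{k+1} and shows that W solves the scheme.
   Uniqueness is the same contraction applied to two bounded solutions. *)

From HB Require Import structures.
From mathcomp Require Import all_boot all_order all_algebra.
From mathcomp Require Import all_classical all_reals all_analysis.
From mathcomp Require Import ring lra zify.
Import Order.TTheory GRing.Theory Num.Theory.
Import numFieldNormedType.Exports.
Set Implicit Arguments. Unset Strict Implicit. Unset Printing Implicit Defensive.
Local Open Scope classical_set_scope.
Local Open Scope ring_scope.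

Section Contraction.
Variables (R : realType) (q : R).
Hypotheses (q_ge0 : 0 <= q) (q_lt1 : q < 1).

Lemma expr_mul_le_eventually (E eps : R) : 0 < eps ->
  exists N, forall k, (N <= k)%N -> q ^+ k * E <= eps.
Proof.
move=> eps_gt0.
have qE0 : (fun k => q ^+ k * E) @ \oo --> (0 : R).
  rewrite -(mul0r E); apply: cvgM; last exact: cvg_cst.
  by apply: cvg_expr; rewrite ger0_norm.
have [N _ HN] := cvgr_dist_le _ _ qE0 _ eps_gt0.
exists N => k /HN; rewrite sub0r normrN; exact: le_trans (ler_norm _).
Qed.

Lemma geometric_bound (I : Type) (D : nat -> I -> R) (M : R) :
  (forall t, D 0%N t <= M) ->
  (forall k E, (forall t, D k t <= E) -> forall t, D k.+1 t <= q * E) ->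
  forall k t, D k t <= q ^+ k * M.
Proof.
move=> D0 DS; elim=> [|k IH] t; first by rewrite mul1r.
by rewrite exprS -mulrA; exact: DS.
Qed.

Lemma contraction_le0 (I : Type) (D : I -> R) :
  (exists M, forall t, D t <= M) ->
  (forall E, (forall t, D t <= E) -> forall t, D t <= q * E) ->
  forall t, D t <= 0.
Proof.
move=> [M DM] Dq t; apply/ler_addgt0Pr => e e_gt0; rewrite add0r.
have [N HN] := expr_mul_le_eventually M e_gt0.
apply: le_trans (HN N (leqnn N)).
exact: (geometric_bound (D := fun=> D) DM (fun _ => Dq)).
Qed.

End Contraction.

Lemma ereal_sup_EFinP (R : realType) (S : set \bar R) (x : R) :
  ereal_sup S = x%:E <->
  ubound S x%:E /\ forall e, 0 < e -> exists2 s, S s & ((x - e)%:E < s)%E.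
Proof.
split=> [supE | [ub approx]].
  split=> [s Ss|e e_gt0]; first by rewrite -supE; exact: ereal_sup_ubound.
  have := ub_ereal_sup_adherent e_gt0 (S := S).
  by rewrite supE EFinB; apply.
apply/eqP; rewrite eq_le ge_ereal_sup //=; apply/lee_addgt0Pr => e e_gt0.
have [s Ss xs] := approx e e_gt0.
rewrite -(subrK e x) EFinD leeD2r // ltW // (lt_le_trans xs) //.
exact: ereal_sup_ubound.
Qed.

Lemma bnd_bool (R : realType) (A : bool -> nat -> R) :
  (forall j, bnd (A j)) -> exists M, forall j i, `|A j i| <= M.
Proof.
move=> Ab; have [M1 H1] := Ab false; have [M2 H2] := Ab true.
by exists (Num.max M1 M2) => -[] i; rewrite le_max ?H1 ?H2 ?orbT.
Qed.

Lemma bnd_subB_le (R : realType) (A B : bool -> nat -> R) :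
  (forall j, bnd (A j)) -> (forall j, bnd (B j)) ->
  exists M, forall t : bool * nat, A t.1 t.2 - B t.1 t.2 <= M.
Proof.
move=> /bnd_bool[MA MA_ge] /bnd_bool[MB MB_ge]; exists (MA + MB) => -[j i] /=.
by apply: le_trans (ler_norm _) _; apply: le_trans (ler_normB _ _) _; exact: lerD.
Qed.

Section Interpolation.
Variables (R : realType) (xlow dx : R).
Hypothesis dx_gt0 : 0 < dx.
Variable x : R.
Hypothesis x_ge : xlow <= x.

(* x lies in the cell [x_n, x_{n+1}) at relative position t. *)
Let z := (x - xlow) / dx.
Let n := Num.truncn z.
Let t := z - n%:R.

Let t_itv : 0 <= t < 1.
Proof.
have z_ge0 : 0 <= z by rewrite divr_ge0 ?subr_ge0 // ltW.
have /andP[] := truncn_itv z_ge0.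
by rewrite -natr1 /t; lra.
Qed.

Let zE : z = n%:R + t.
Proof. by rewrite /t; lra. Qed.

Lemma hatb_dist k : hatb xlow dx k x = Num.max 0 (1 - `|z - k%:R|).
Proof.
rewrite /hatb /grid /z; congr (Num.max 0 (1 - _)).
have -> : x - (xlow + k%:R * dx) = ((x - xlow) / dx - k%:R) * dx.
  by rewrite mulrBl divfK ?gt_eqF //; lra.
by rewrite normrM (gtr0_norm dx_gt0) mulfK ?gt_eqF.
Qed.

Lemma hatb_eq0 k : k != n -> k != n.+1 -> hatb xlow dx k x = 0.
Proof.
move=> kn kn1; have /andP[t_ge0 t_lt1] := t_itv.
rewrite hatb_dist zE; apply/max_idPl; rewrite subr_le0.
have [kn'|nk] := ltnP k n.
  have : k.+1%:R <= n%:R :> R by rewrite ler_nat.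
  by rewrite -natr1 => ?; apply: le_trans (ler_norm _); lra.
have : n.+2%:R <= k%:R :> R by rewrite ler_nat; lia.
by rewrite -!natr1 -normrN => ?; apply: le_trans (ler_norm _); lra.
Qed.

Lemma interp_two_point U : interp xlow dx U x = (1 - t) * U n + t * U n.+1.
Proof.
have /andP[t_ge0 t_lt1] := t_itv.
have hatb_n : hatb xlow dx n x = 1 - t.
  by rewrite hatb_dist -/t ger0_norm //; apply/max_idPr; lra.
have hatb_n1 : hatb xlow dx n.+1 x = t.
  rewrite hatb_dist zE -natr1 ler0_norm; last lra.
  rewrite (_ : 1 - - _ = t); [exact/max_idPr | lra].
rewrite /interp; apply: norm_lim_near_cst; exists n.+2 => // m /= nm.
rewrite -(subnKC nm); elim: (m - n.+2)%N => [|d IH].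
  rewrite addn0 !seriesSr hatb_n hatb_n1 [series _ n]big1_seq ?add0r // => k.
  by rewrite mem_index_iota => /andP[_ kn]; rewrite hatb_eq0 ?mul0r //; lia.
by rewrite addnS seriesSr IH hatb_eq0 ?mul0r ?addr0 //; lia.
Qed.

Lemma interp_le U E : (forall k, U k <= E) -> interp xlow dx U x <= E.
Proof.
move=> UE; rewrite interp_two_point; have /andP[t_ge0 t_lt1] := t_itv.
have := UE n; have := UE n.+1; nra.
Qed.

Lemma interpB U V : interp xlow dx U x - interp xlow dx V x = interp xlow dx (U \- V) x.
Proof. by rewrite !interp_two_point /=; lra. Qed.

End Interpolation.

Section PolicyValue.
Variables (R : realType) (rho r gamma xlow h dx : R) (y lam : bool -> R).
Hypotheses (rho_gt0 : 0 < rho) (gamma_gt1 : 1 < gamma) (lam_ge0 : forall j, 0 <= lam j).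
Hypotheses (h_gt0 : 0 < h) (dx_gt0 : 0 < dx) (rhoh_lt1 : rho * h < 1).
Hypothesis lamh_lt1 : forall j, lam j * h < 1.

Local Notation q := (1 - rho * h).
Local Notation adm := (adm r xlow h dx y).

Let q_ge0 : 0 <= q. Proof. by rewrite subr_ge0 ltW. Qed.
Let q_lt1 : q < 1. Proof. by rewrite ltrBlDr ltrDl mulr_gt0. Qed.

Definition utilr (c : R) : R := c `^ (1 - gamma) / (1 - gamma).

Definition target i j c := grid xlow dx i + h * drift r xlow dx y i j c.

Definition policy_value (A : bool -> nat -> R) i j c :=
  h * utilr c +
  q * (lam j * h * A (~~ j) i + (1 - lam j * h) * interp xlow dx (A j) (target i j c)).

Lemma utilr_le0 c : 0 < c -> utilr c <= 0.
Proof.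
by move=> c_gt0; rewrite pmulr_rle0 ?powR_gt0 // invr_le0 subr_le0 ltW.
Qed.

Lemma util_gt0 c : 0 < c -> util gamma c = (utilr c)%:E.
Proof. by rewrite /util => ->. Qed.

Lemma policy_value_subB A B i j c E : adm i j c ->
  (forall j' i', A j' i' - B j' i' <= E) ->
  policy_value A i j c - policy_value B i j c <= q * E.
Proof.
move=> [_ x_ge] ABE; have lamh_ge0 : 0 <= lam j * h by rewrite mulr_ge0 // ltW.
have := lamh_lt1 j; have := ABE (~~ j) i.
have := interp_le dx_gt0 x_ge (fun i' => ABE j i'); rewrite -interpB //.
set a := interp _ _ (A j) _; set b := interp _ _ (B j) _ => ab_le Ajb_le lamh_lt.
have mean_le : lam j * h * (A (~~ j) i - B (~~ j) i) + (1 - lam j * h) * (a - b) <= E.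
  by nra.
suff -> : policy_value A i j c - policy_value B i j c =
  q * (lam j * h * (A (~~ j) i - B (~~ j) i) + (1 - lam j * h) * (a - b)).
  exact: ler_wpM2l.
by rewrite /policy_value -/a -/b; ring.
Qed.

Lemma policy_value_le A B i j c : adm i j c ->
  (forall j' i', A j' i' <= B j' i') -> policy_value A i j c <= policy_value B i j c.
Proof.
move=> c_adm AB; rewrite -subr_le0 -(mulr0 q); apply: policy_value_subB => // j' i'.
by rewrite subr_le0.
Qed.

Lemma policy_value0_le0 i j c : adm i j c -> 0 < c -> policy_value (fun _ _ => 0) i j c <= 0.
Proof.
move=> [_ x_ge] c_gt0; have := interp_le dx_gt0 x_ge (fun=> lexx (0 : R)).
have := utilr_le0 c_gt0; have := lamh_lt1 j; rewrite /policy_value.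
set u := utilr c; set a := interp _ _ _ _ => a_le0 u_le0 lamh_lt.
have hu : h * u <= 0 by rewrite pmulr_rle0.
have qa : q * (1 - lam j * h) * a <= 0 by rewrite mulr_ge0_le0 // mulr_ge0 // subr_ge0 ltW.
move: hu qa; rewrite mulr0 add0r mulrA; lra.
Qed.

Definition scheme_lin (A : bool -> nat -> R) i j :=
  rho * A j i - q * lam j * (A (~~ j) i - A j i).

(* Together, bellman_ub and bellman_lb say that
   A j i = sup_{c admissible, c > 0} policy_value A i j c. *)
Definition bellman_ub (A : bool -> nat -> R) i j :=
  forall c, adm i j c -> 0 < c -> policy_value A i j c <= A j i.

Definition bellman_lb (A : bool -> nat -> R) i j :=
  forall e, 0 < e -> exists2 c, adm i j c /\ 0 < c & A j i - e < policy_value A i j c.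

Lemma scheme_termE A i j c : 0 < c ->
  (util gamma c + (q * (1 - lam j * h) / h * (interp xlow dx (A j) (target i j c) - A j i))%:E)%E
  = (scheme_lin A i j + (policy_value A i j c - A j i) / h)%:E.
Proof.
move=> c_gt0; rewrite util_gt0 // -EFinD /scheme_lin /policy_value.
by congr (_%:E); field; rewrite gt_eqF.
Qed.

Lemma schemeF_eq0P A i j :
  schemeF rho r gamma xlow h dx y lam i j (A j i) (A (~~ j) i) (A j) = 0%E <->
  bellman_ub A i j /\ bellman_lb A i j.
Proof.
rewrite /schemeF -/(scheme_lin A i j); set S := (X in ereal_sup X).
set L := scheme_lin A i j.
have termE_le c : ((L + (policy_value A i j c - A j i) / h)%:E <= L%:E)%E =
                  (policy_value A i j c <= A j i).
  by rewrite lee_fin gerDl pmulr_lle0 ?invr_gt0 // subr_le0.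
have -> : (L%:E - ereal_sup S = 0)%E <-> ereal_sup S = L%:E.
  case: (ereal_sup S) => [s||] //=; rewrite -EFinB.
  by split=> [[/eqP]|[->]]; rewrite ?subrr // subr_eq0 => /eqP ->.
rewrite ereal_sup_EFinP; split=> [[ub approx]|[ub lb]]; split.
- by move=> c c_adm c_gt0; rewrite -termE_le -scheme_termE //; apply: ub; exists c.
- move=> e e_gt0; have [_ [c c_adm <-]] := approx _ (divr_gt0 e_gt0 h_gt0).
  have [c_gt0|c_le0] := boolP (0 < c); last by rewrite /util (negbTE c_le0).
  rewrite scheme_termE // lte_fin ltrD2l -mulNr ltr_pM2r ?invr_gt0 // => lt_e.
  by exists c => //; lra.
- move=> _ [c c_adm <-].
  have [c_gt0|c_le0] := boolP (0 < c); last by rewrite /util (negbTE c_le0) leNye.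
  by rewrite scheme_termE // termE_le; apply: ub.
- move=> e e_gt0; have [c [c_adm c_gt0] lt_e] := lb _ (mulr_gt0 e_gt0 h_gt0).
  eexists; first by exists c.
  by rewrite scheme_termE // lte_fin ltrD2l ltr_pdivlMr // mulNr; lra.
Qed.

Lemma policy_eval_fin A i j c v :
  (v%:E = h%:E * util gamma c +
    (q * (lam j * h * A (~~ j) i + (1 - lam j * h) * interp xlow dx (A j) (target i j c)))%:E)%E ->
  0 < c /\ v = policy_value A i j c.
Proof.
have [c_gt0|c_le0] := boolP (0 < c).
  by rewrite util_gt0 // -EFinM -EFinD => -[].
by rewrite /util (negbTE c_le0) mulrNy gtr0_sg // mul1e.
Qed.

Lemma policy_value_le_polobj A i j c c' : 0 < c -> 0 < c' ->
  (polobj rho r gamma xlow h dx y lam i j (A j) c'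
    <= polobj rho r gamma xlow h dx y lam i j (A j) c)%E ->
  policy_value A i j c' <= policy_value A i j c.
Proof.
move=> c_gt0 c'_gt0; rewrite /polobj !util_gt0 // -!EFinM -!EFinD lee_fin.
by rewrite /policy_value /target; lra.
Qed.

Lemma bellman_le A B : (forall j, bnd (A j)) -> (forall j, bnd (B j)) ->
  (forall i j, bellman_lb A i j) -> (forall i j, bellman_ub B i j) ->
  forall j i, A j i <= B j i.
Proof.
move=> Ab Bb Alb Bub j i; rewrite -subr_le0.
apply: (contraction_le0 q_ge0 q_lt1 (bnd_subB_le Ab Bb) _ (j, i)).
move=> E ABE [j' i'] /=; apply/ler_addgt0Pr => e e_gt0.
have [c [c_adm c_gt0] lt_e] := Alb i' j' e e_gt0.
have := Bub i' j' c c_adm c_gt0.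
have := policy_value_subB c_adm (fun j'' i'' => ABE (j'', i'')).
lra.
Qed.

Lemma bellman_unique A B : (forall j, bnd (A j)) -> (forall j, bnd (B j)) ->
  (forall i j, bellman_ub A i j /\ bellman_lb A i j) ->
  (forall i j, bellman_ub B i j /\ bellman_lb B i j) -> A = B.
Proof.
move=> Ab Bb AB BB; apply/funext => j; apply/funext => i; apply/le_anti.
by apply/andP; split; apply: bellman_le => // i' j'; case: (AB i' j'); case: (BB i' j').
Qed.

Section PolicyIteration.
Variables (c : nat -> nat -> bool -> R) (V : nat -> bool -> nat -> R).
Hypotheses (c_adm : forall k i j, adm i j (c k i j)) (c_gt0 : forall k i j, 0 < c k i j).
Hypothesis V_bnd : forall k j, bnd (V k j).
Hypothesis V_eval : forall k i j, V k j i = policy_value (V k) i j (c k i j).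
Hypothesis c_max : forall k i j c', adm i j c' -> 0 < c' ->
  policy_value (V k) i j c' <= policy_value (V k) i j (c k.+1 i j).

Lemma V_le_succ k j i : V k j i <= V k.+1 j i.
Proof.
rewrite -subr_le0.
apply: (contraction_le0 q_ge0 q_lt1 (bnd_subB_le (V_bnd k) (V_bnd k.+1)) _ (j, i)).
move=> E VE [j' i'] /=; rewrite [V k _ _]V_eval [V k.+1 _ _]V_eval.
have := c_max k (c_adm k i' j') (c_gt0 k i' j').
have := policy_value_subB (c_adm k.+1 i' j') (fun j'' i'' => VE (j'', i'')).
lra.
Qed.

Lemma V_le0 k j i : V k j i <= 0.
Proof.
apply: (contraction_le0 q_ge0 q_lt1 (D := fun t => V k t.1 t.2) _ _ (j, i)).
  have [M M_ge] := bnd_bool (V_bnd k).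
  by exists M => -[j' i'] /=; apply: le_trans (ler_norm _) _.
move=> E VE [j' i'] /=; rewrite V_eval.
have := policy_value0_le0 (c_adm k i' j') (c_gt0 k i' j').
have V0E j'' i'' : V k j'' i'' - (fun _ _ => 0) j'' i'' <= E.
  by rewrite subr0; exact: (VE (j'', i'')).
have := policy_value_subB (c_adm k i' j') V0E.
lra.
Qed.

Definition Vlim j i := sup (range (fun k => V k j i)).

Let Vlim_has_sup j i : has_sup (range (fun k => V k j i)).
Proof. by split; [exists (V 0%N j i), 0%N | exists 0 => _ [k _ <-]; exact: V_le0]. Qed.

Lemma V_le_Vlim k j i : V k j i <= Vlim j i.
Proof. by apply: sup_upper_bound => //; exists k. Qed.

Lemma Vlim_le0 j i : Vlim j i <= 0.
Proof. by apply: ge_sup; [exists (V 0%N j i), 0%N | move=> _ [k _ <-]; exact: V_le0]. Qed.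

Lemma Vlim_bnd j : bnd (Vlim j).
Proof.
have [M M_ge] := V_bnd 0%N j; exists M => i; rewrite ler_norml.
have := M_ge i; rewrite ler_norml => /andP[M_le _].
rewrite (le_trans M_le (V_le_Vlim _ _ _)) (le_trans (Vlim_le0 _ _)) //.
exact: le_trans (M_ge i).
Qed.

Lemma Vlim_lb i j : bellman_lb Vlim i j.
Proof.
move=> e e_gt0; have [_ [k _ <-] lt_e] := sup_adherent e_gt0 (Vlim_has_sup j i).
exists (c k i j) => //; apply: (lt_le_trans lt_e); rewrite V_eval.
by apply: policy_value_le => // j' i'; exact: V_le_Vlim.
Qed.

Lemma policy_value_le_succ k i j c' : adm i j c' -> 0 < c' ->
  policy_value (V k) i j c' <= V k.+1 j i.
Proof.
move=> c'_adm c'_gt0; apply: le_trans (c_max k c'_adm c'_gt0) _; rewrite V_eval.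
by apply: policy_value_le => // j' i'; exact: V_le_succ.
Qed.

Lemma Vlim_subV_le : exists M, forall k j i, Vlim j i - V k j i <= q ^+ k * M.
Proof.
have [M M_ge] := bnd_subB_le Vlim_bnd (V_bnd 0%N); exists M => k j i.
apply: (geometric_bound (q := q) (D := fun k t => Vlim t.1 t.2 - V k t.1 t.2) M_ge _ k (j, i)).
move=> {}k E VE [j' i'] /=; apply/ler_addgt0Pr => e e_gt0.
have [c' [c'_adm c'_gt0] lt_e] := Vlim_lb i' j' e_gt0.
have := policy_value_le_succ k c'_adm c'_gt0.
have := policy_value_subB c'_adm (fun j'' i'' => VE (j'', i'')).
lra.
Qed.

Lemma V_cvg_unif eps : 0 < eps -> exists N, forall k, (N <= k)%N ->
  forall j i, `|V k j i - Vlim j i| <= eps.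
Proof.
move=> eps_gt0; have [M VM] := Vlim_subV_le.
have [N qM_le] := expr_mul_le_eventually q_ge0 q_lt1 M eps_gt0.
exists N => k Nk j i; rewrite distrC ger0_norm ?subr_ge0 ?V_le_Vlim //.
exact: le_trans (VM k j i) (qM_le k Nk).
Qed.

Lemma Vlim_ub i j : bellman_ub Vlim i j.
Proof.
(* pass to the limit in policy_value (V N) i j c' <= V N.+1 j i, using that
   V N converges to Vlim uniformly *)
move=> c' c'_adm c'_gt0; apply/ler_addgt0Pr => e e_gt0.
have [N VN] := V_cvg_unif e_gt0.
have VlimN j' i' : Vlim j' i' - V N j' i' <= e.
  by rewrite (le_trans (ler_norm _)) // distrC VN.
have := policy_value_subB c'_adm VlimN; have := policy_value_le_succ N c'_adm c'_gt0.
have := V_le_Vlim N.+1 j i; have : q * e <= e by rewrite ler_piMl // ltW.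
lra.
Qed.

Lemma policy_iteration_cvg :
  (forall k j i, V k j i <= V k.+1 j i) /\
  exists W : bool -> nat -> R,
    [/\ forall j, bnd (W j),
        forall i j, schemeF rho r gamma xlow h dx y lam i j (W j i) (W (~~ j) i) (W j) = 0%E,
        forall W' : bool -> nat -> R, (forall j, bnd (W' j)) ->
          (forall i j, schemeF rho r gamma xlow h dx y lam i j (W' j i) (W' (~~ j) i) (W' j) = 0%E) ->
          W' = W
      & forall eps : R, 0 < eps -> exists N : nat, forall k, (N <= k)%N ->
          forall j i, `|V k j i - W j i| <= eps].
Proof.
have Vlim_bellman i j : bellman_ub Vlim i j /\ bellman_lb Vlim i j.
  by split; [exact: Vlim_ub | exact: Vlim_lb].
split; first exact: V_le_succ.
exists Vlim; split.
- exact: Vlim_bnd.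
- by move=> i j; apply/schemeF_eq0P/Vlim_bellman.
- move=> W' W'_bnd W'_scheme.
  by apply: bellman_unique Vlim_bnd _ Vlim_bellman => // i j; apply/schemeF_eq0P.
- exact: V_cvg_unif.
Qed.

End PolicyIteration.

End PolicyValue.

Theorem mainTheorem13 (R : realType) (rho r gamma xlow h dx : R) (y lam : bool -> R)
  (Hrho : 0 < rho) (Hr : r < rho)
  (Hy1 : 0 < y false) (Hy12 : y false < y true)
  (Hgamma : 1 < gamma) (Hxlow : xlow <= 0)
  (Hxy : forall j, 0 < rho * xlow + y j)
  (Hlam : forall j, 0 <= lam j)
  (Hh : 0 < h) (Hdx : 0 < dx) (Hrhoh : rho * h < 1)
  (Hlamh : forall j, lam j * h < 1)
  (c : nat -> nat -> bool -> R) (V : nat -> bool -> nat -> R)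
  (Hc0 : forall i j, adm r xlow h dx y i j (c 0%N i j))
  (HVb : forall k j, bnd (V k j))
  (Heval : forall k i j,
     ((V k j i)%:E =
      h%:E * util gamma (c k i j) +
      ((1 - rho * h) *
        (lam j * h * V k (~~ j) i +
         (1 - lam j * h) *
           interp xlow dx (V k j)
             (grid xlow dx i + h * drift r xlow dx y i j (c k i j))))%:E)%E)
  (Hupd_adm : forall k i j, adm r xlow h dx y i j (c k.+1 i j))
  (Hupd_max : forall k i j c', adm r xlow h dx y i j c' ->
     (polobj rho r gamma xlow h dx y lam i j (V k j) c'
      <= polobj rho r gamma xlow h dx y lam i j (V k j) (c k.+1 i j))%E) :
  (forall k j i, V k j i <= V k.+1 j i) /\
  exists W : bool -> nat -> R,
    [/\ forall j, bnd (W j),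
        forall i j, schemeF rho r gamma xlow h dx y lam i j (W j i) (W (~~ j) i) (W j) = 0%E,
        forall W' : bool -> nat -> R, (forall j, bnd (W' j)) ->
          (forall i j, schemeF rho r gamma xlow h dx y lam i j (W' j i) (W' (~~ j) i) (W' j) = 0%E) ->
          W' = W
      & forall eps : R, 0 < eps -> exists N : nat, forall k, (N <= k)%N ->
          forall j i, `|V k j i - W j i| <= eps].
Proof.
have c_adm k i j : adm r xlow h dx y i j (c k i j).
  by case: k => [|k]; [exact: Hc0 | exact: Hupd_adm].
(* u(c) = -oo for c <= 0, so finite values force positive controls. *)
have c_eval k i j := policy_eval_fin Hh (Heval k i j).
apply: (policy_iteration_cvg Hrho Hgamma Hlam Hh Hdx Hrhoh Hlamh c_adm _ HVb)
  => [k i j|k i j|k i j c' c'_adm c'_gt0].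
- exact: (c_eval k i j).1.
- exact: (c_eval k i j).2.
- apply: policy_value_le_polobj (Hupd_max k i j c' c'_adm) => //.
  exact: (c_eval k.+1 i j).1.
Qed.
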